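(* Let $(X,P,o)$ be a generalized parametric metric space such that $P$ satisfies (P5) and $o$ is continuous. Then $(X,\tau_P)$ is a $T_1$ space: for any distinct $x,y\in X$ there are $U,V\in\tau_P$ with $x\in U$, $y\notin U$, $y\in V$, $x\notin V$.
   Context: A binary operation $o:[0,\infty)\times[0,\infty)\to[0,\infty)$ (written $\alpha\, o\, \beta$) is assumed to satisfy, for all $\alpha,\beta,\gamma\in[0,\infty)$: (a) $\alpha\, o\, 0=\alpha$; (b) $\alpha\le\beta\implies \alpha\, o\,\gamma\le\beta\, o\,\gamma$; (c) $\alpha\, o\,\gamma=\gamma\, o\,\alpha$; (d) $\alpha\, o\,(\beta\, o\,\gamma)=(\alpha\, o\,\beta)\, o\,\gamma$. It is continuous if whenever $\alpha_n\to\alpha$ and $\beta_n\to\beta$ in $[0,\infty)$ we have $\alpha_n\, o\,\beta_n\to\alpha\, o\,\beta$. A generalized parametric metric on a nonempty set $X$ is a function $P:X\times X\times(0,\infty)\to[0,\infty)$ such that: (P1) $P(a,b,t)=0$ for all $t>0$ if and only if $a=b$; (P2) $P(a,b,t)=P(b,a,t)$ for all $a,b\in X$, $t>0$; (P3) $P(a,b,s+t)\le P(a,x,s)\, o\, P(b,x,t)$ for all $s,t>0$ and $a,b,x\in X$. The triple $(X,P,o)$ is a generalized parametric metric space. Condition (P5): for all $a,b\in X$, the map $t\mapsto P(a,b,t)$ is continuous on $(0,\infty)$. Open ball: $B(a,\alpha,t)=\{b\in X: P(a,b,t)<\alpha\}$. $\tau_P$ is the topology consisting of all $A\subseteq X$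 such that for every $a\in A$ there exist $\alpha>0,t>0$ with $B(a,\alpha,t)\subseteq A$. *)

From Stdlib Require Import Reals.
Open Scope R_scope.

(* Binary operation o on [0,oo), modeled as a function R -> R -> R whose
   axioms are imposed only on nonnegative arguments. *)
Definition is_gen_op (o : R -> R -> R) : Prop :=
  (forall a, 0 <= a -> o a 0 = a) /\
  (forall a b, 0 <= a -> 0 <= b -> 0 <= o a b) /\
  (forall a b c, 0 <= a -> 0 <= b -> 0 <= c -> a <= b -> o a c <= o b c) /\
  (forall a b, 0 <= a -> 0 <= b -> o a b = o b a) /\
  (forall a b c, 0 <= a -> 0 <= b -> 0 <= c -> o a (o b c) = o (o a b) c).

Definition op_continuous (o : R -> R -> R) : Prop :=
  forall (an bn : nat -> R) (a b : R),
    (forall n, 0 <= an n) -> (forall n, 0 <= bn n) -> 0 <= a -> 0 <= b ->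
    Un_cv an a -> Un_cv bn b -> Un_cv (fun n => o (an n) (bn n)) (o a b).

(* Generalized parametric metric; P is defined for all t but the axioms only
   concern t > 0. *)
Definition is_gen_param_metric {X : Type} (P : X -> X -> R -> R) (o : R -> R -> R) : Prop :=
  (forall a b t, 0 < t -> 0 <= P a b t) /\
  (forall a b, (forall t, 0 < t -> P a b t = 0) <-> a = b) /\
  (forall a b t, 0 < t -> P a b t = P b a t) /\
  (forall a b x s t, 0 < s -> 0 < t -> P a b (s + t) <= o (P a x s) (P b x t)).

Definition P5 {X : Type} (P : X -> X -> R -> R) : Prop :=
  forall a b t, 0 < t ->
    forall eps, 0 < eps -> exists delta, 0 < delta /\
      forall s, 0 < s -> Rabs (s - t) < delta -> Rabs (P a b s - P a b t) < eps.

Definition ball {X : Type} (P : X -> X -> R -> R) (a : X) (alpha t : R) : X -> Prop :=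
  fun b => P a b t < alpha.

Definition tauP_open {X : Type} (P : X -> X -> R -> R) (A : X -> Prop) : Prop :=
  forall a, A a -> exists alpha t, 0 < alpha /\ 0 < t /\
    forall b, ball P a alpha t b -> A b.

From Stdlib Require Import Reals Lra Classical.
Open Scope R_scope.

(* The key observation is that singletons are closed, i.e. the complement
   X \ {y} of every point is open.  Indeed, if a <> y then by (P1) some
   parameter t > 0 has P(a,y,t) <> 0, hence P(a,y,t) > 0 by nonnegativity,
   and the open ball B(a, P(a,y,t), t) avoids y because y itself lies at
   "distance" exactly P(a,y,t) from a.  Given distinct x, y, the sets
   U = X \ {y} and V = X \ {x} then witness the T1 property. *)

Section PuncturedSetsOpen.

Variables (X : Type) (P : X -> X -> R -> R).

Hypothesis P_nonneg : forall a b t, 0 < t -> 0 <= P a b t.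
Hypothesis P_zero_eq : forall a b, (forall t, 0 < t -> P a b t = 0) -> a = b.

Lemma distinct_pos_parameter (a b : X) :
  a <> b -> exists t, 0 < t /\ 0 < P a b t.
Proof.
  intros Hab.
  apply NNPP; intros Hnone; apply Hab, P_zero_eq.
  intros t Ht.
  destruct (Rle_lt_or_eq_dec _ _ (P_nonneg a b t Ht)) as [Hpos | Hzero];
    [exfalso; apply Hnone; exists t; split; assumption | now symmetry].
Qed.

Lemma ball_radius_excludes (a b : X) (t : R) : ~ ball P a (P a b t) t b.
Proof. unfold ball; lra. Qed.

Lemma punctured_open (y : X) : tauP_open P (fun z => z <> y).
Proof.
  intros a Hay.
  destruct (distinct_pos_parameter a y Hay) as [t [Ht Hpos]].
  exists (P a y t), t; repeat split; try assumption.
  intros b Hb ->.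
  exact (ball_radius_excludes a y t Hb).
Qed.

End PuncturedSetsOpen.

Theorem mainTheorem9 (X : Type) (P : X -> X -> R -> R) (o : R -> R -> R) :
  is_gen_op o -> is_gen_param_metric P o -> P5 P -> op_continuous o ->
  forall x y : X, x <> y ->
    exists U V : X -> Prop,
      tauP_open P U /\ tauP_open P V /\ U x /\ ~ U y /\ V y /\ ~ V x.
Proof.
  intros _ [P_nonneg [P_zero_iff _]] _ _ x y Hxy.
  assert (P_zero_eq : forall a b, (forall t, 0 < t -> P a b t = 0) -> a = b)
    by (intros a b; apply P_zero_iff).
  exists (fun z => z <> y), (fun z => z <> x).
  split; [exact (punctured_open X P P_nonneg P_zero_eq y) |].
  split; [exact (punctured_open X P P_nonneg P_zero_eq x) |].
  split; [exact Hxy |].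
  split; [now intros Hyy |].
  split; [now intros Hyx; apply Hxy | now intros Hxx].
Qed.
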